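(* If $G$ is a $(3,2)$-critical graph that contains at least three odd cycles, then every two distinct odd cycles of $G$ have more than one common vertex.
   Context: All graphs are finite and simple. An odd cycle is a cycle (subgraph) of odd length. For a graph $G$, ${\rm es}_{\chi}(G)$ is the minimum number of edges of $G$ whose removal results in a spanning subgraph $G_1$ with $\chi(G_1)=\chi(G)-1$. $G$ is edge-stability critical if ${\rm es}_{\chi}(G-e)<{\rm es}_{\chi}(G)$ for every edge $e$. $G$ is $(3,2)$-critical if it is edge-stability critical with $\chi(G)=3$ and ${\rm es}_{\chi}(G)=2$. *)

From mathcomp Require Import all_boot.
Set Implicit Arguments. Unset Strict Implicit. Unset Printing Implicit Defensive.

(* A finite simple graph on vertex type T is given by its edge set
   E : {set {set T}}, every edge being a 2-element subset of T
   (this is required as a hypothesis, see [simple_graph]).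
   Spanning subgraphs are subsets F of E. *)

Definition simple_graph (T : finType) (E : {set {set T}}) : Prop :=
  forall e, e \in E -> #|e| = 2.

Definition adj (T : finType) (E : {set {set T}}) : rel T :=
  fun x y => [set x; y] \in E.

Definition colorable (T : finType) (E : {set {set T}}) (k : nat) : bool :=
  [exists f : {ffun T -> 'I_k},
     [forall x, forall y, adj E x y ==> (f x != f y)]].

(* chromatic number: least k such that E is k-colourable
   (#|T| colours always suffice, so the bound #|T| is harmless) *)
Definition chi (T : finType) (E : {set {set T}}) : nat :=
  \big[minn/#|T|]_(k < #|T|.+1 | colorable E k) k.

(* es_chi: least number of edges whose removal gives a spanning subgraph
   of chromatic number chi - 1.  The default #|E|.+1 is only used when
   no such subgraph exists (never the case for the graphs considered). *)
Definition es_chi (T : finType) (E : {set {set T}}) : nat :=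
  \big[minn/#|E|.+1]_(F : {set {set T}} |
        (F \subset E) && (chi F == (chi E).-1)) #|E :\: F|.

Definition edge_stability_critical (T : finType) (E : {set {set T}}) : Prop :=
  forall e, e \in E -> es_chi (E :\ e) < es_chi E.

Definition critical32 (T : finType) (E : {set {set T}}) : Prop :=
  [/\ edge_stability_critical E, chi E = 3 & es_chi E = 2].

(* An odd cycle (as a subgraph) is represented by its edge set: the edges
   {x, next s x} of a cyclic sequence s of distinct vertices of odd
   length >= 3 with consecutive vertices adjacent in E. *)
Definition cycle_edges (T : finType) (s : seq T) : {set {set T}} :=
  [set [set x; next s x] | x in s].

Definition odd_cycle (T : finType) (E : {set {set T}}) (C : {set {set T}}) : Prop :=
  exists s : seq T, [/\ uniq s, odd (size s), 3 <= size s,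
                       cycle (adj E) s & C = cycle_edges s].

Definition verts (T : finType) (C : {set {set T}}) : {set T} :=
  \bigcup_(e in C) e.

From mathcomp Require Import all_boot.
Set Implicit Arguments. Unset Strict Implicit. Unset Printing Implicit Defensive.

(* For every edge e of a (3,2)-critical graph, deleting e and then at most one
   further edge f_e leaves a bipartite graph, so every odd cycle avoiding e
   passes through f_e.  If two odd cycles C1, C2 share at most one vertex
   they are edge-disjoint, and this forces every edge into C1 or C2 and every
   odd cycle contained in C1 to be C1 itself.  An odd cycle inside the union
   cannot cross from C1 to C2 through a single vertex, so C1 and C2 are the
   only odd cycles of the graph. *)

Lemma bigmin_le_cond (I : eqType) (r : seq I) (P : pred I) (F : I -> nat) idx i :
  i \in r -> P i -> \big[minn/idx]_(j <- r | P j) F j <= F i.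
Proof.
elim: r => // a r IHr; rewrite inE big_cons => /orP[/eqP <- -> | ir Pi].
  exact: geq_minl.
case: ifP => _; last exact: IHr.
exact: leq_trans (geq_minr _ _) (IHr ir Pi).
Qed.

Lemma subset_set1_of_card_le1 (T : finType) (A : {set T}) (x0 : T) :
  #|A| <= 1 -> exists x, A \subset [set x].
Proof.
have [-> | [x xA]] := set_0Vmem A => A_le1; first by exists x0; rewrite sub0set.
by exists x; apply/subsetP => y yA; rewrite inE (card_le1_eqP A_le1 y x).
Qed.

Section Colouring.
Variable T : finType.
Implicit Types G F : {set {set T}}.

Lemma simple_graph_subset G F : simple_graph G -> F \subset G -> simple_graph F.
Proof. by move=> simG /subsetP sFG e /sFG /simG. Qed.

Lemma colorable_widen G k k' : k <= k' -> colorable G k -> colorable G k'.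
Proof.
move=> le_kk' /existsP[f /forallP f_ok]; apply/existsP.
exists [ffun x => widen_ord le_kk' (f x)]; apply/forallP => x; apply/forallP => y.
by rewrite !ffunE; apply/implyP => /(implyP (forallP (f_ok x) y)).
Qed.

Lemma colorable_subset G F k : F \subset G -> colorable G k -> colorable F k.
Proof.
move=> /subsetP sFG /existsP[f /forallP f_ok]; apply/existsP; exists f.
apply/forallP => x; apply/forallP => y; apply/implyP => /sFG.
exact: (implyP (forallP (f_ok x) y)).
Qed.

Lemma colorable_set0 k : 0 < k -> colorable (set0 : {set {set T}}) k.
Proof.
case: k => // k _; apply/existsP; exists [ffun => ord0].
by apply/forallP => x; apply/forallP => y; rewrite /adj inE.
Qed.

Lemma colorable_card G : simple_graph G -> colorable G #|T|.
Proof.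
move=> simG; apply/existsP; exists [ffun x => enum_rank x].
apply/forallP => x; apply/forallP => y; apply/implyP => /simG.
rewrite !ffunE => card_xy; apply/eqP => /enum_rank_inj xy.
by move: card_xy; rewrite xy setUid cards1.
Qed.

Lemma chi_colorable G : simple_graph G -> colorable G (chi G).
Proof.
move=> simG; apply: (big_ind (colorable G)) => //; first exact: colorable_card.
by move=> k k' colk colk'; rewrite /minn; case: ifP.
Qed.

Lemma chi_le_card G : chi G <= #|T|.
Proof.
apply: (big_ind (fun k => k <= #|T|)) => // [k k' le_k _ | k _].
  exact: leq_trans (geq_minl _ _) le_k.
by rewrite -ltnS.
Qed.

Lemma chi_min G k : colorable G k -> chi G <= k.
Proof.
move=> colk; have [le_kT | lt_Tk] := leqP k #|T|; last first.
  exact: leq_trans (chi_le_card G) (ltnW lt_Tk).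
rewrite -ltnS in le_kT.
exact: (@bigmin_le_cond _ _ (fun i : 'I_#|T|.+1 => colorable G i) val _
  (Ordinal le_kT) (mem_index_enum _) colk).
Qed.

Lemma chi_subset G F : simple_graph G -> F \subset G -> chi F <= chi G.
Proof.
by move=> simG sFG; apply/chi_min/(colorable_subset sFG)/chi_colorable.
Qed.

Lemma es_chi_witness G :
  es_chi G <= #|G| ->
  exists F, [/\ F \subset G, chi F = (chi G).-1 & #|G :\: F| <= es_chi G].
Proof.
apply: (big_ind (fun m => m <= #|G| -> exists F,
  [/\ F \subset G, chi F = (chi G).-1 & #|G :\: F| <= m])) => [|m m' IHm IHm'|F].
- by rewrite ltnn.
- by rewrite /minn; case: ifP.
- by case/andP=> sFG /eqP chiF _; exists F.
Qed.

End Colouring.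

Lemma cycle_alternating_even (T : Type) (b : T -> bool) (s : seq T) :
  cycle (fun x y => b x != b y) s -> ~~ odd (size s).
Proof.
case: s => //= x p; set e := fun x y => _.
suff parity y q : path e y q -> b (last y q) = odd (size q) (+) b y.
  by move/parity; rewrite last_rcons size_rcons /=; case: (b x); case: odd.
elim: q y => //= z q IHq y /andP[/negbTE b_yz /IHq ->].
by case: (b y) (b z) b_yz => [] []; case: odd.
Qed.

Lemma sorted_homo_eq (T R : eqType) (P : pred T) (r : rel T) (h : T -> R) s :
  {in P &, forall x y, r x y -> h x = h y} -> all P s -> sorted r s ->
  {in s &, forall x y, h x = h y}.
Proof.
case: s => // x s r_h Ps xs_path.
have h_path : path (fun u v => h u == h v) x s.
  by apply: (sub_in_path (P := P)) xs_path => // u v Pu Pv /(r_h u v Pu Pv) ->.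
have h_trans : transitive (fun u v => h u == h v) by move=> v u w /eqP -> /eqP ->.
move: (order_path_min h_trans h_path) => /allP h_eq u v; rewrite !inE.
by move=> /predU1P[-> | /h_eq/eqP <-] /predU1P[-> | /h_eq/eqP <-].
Qed.

Lemma cycle_homo_eq_off (T R : eqType) (r : rel T) (h : T -> R) (w : T) s :
  uniq s -> cycle r s -> {in predC1 w &, forall x y, r x y -> h x = h y} ->
  {in [predD1 s & w] &, forall x y, h x = h y}.
Proof.
move=> s_uniq s_cycle r_h.
suff [p [p_sorted p_w s_p]] : exists p,
    [/\ sorted r p, all (predC1 w) p & {subset [predD1 s & w] <= p}].
  by move=> x y /s_p xp /s_p yp; apply: sorted_homo_eq r_h p_w p_sorted x y xp yp.
have [ws | wNs] := boolP (w \in s).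
  have [i p def_s] := rot_to ws; exists p.
  move: s_uniq s_cycle; rewrite -(rot_uniq i) -(rot_cycle i) def_s /=.
  case/andP=> wNp _; rewrite rcons_path => /andP[/path_sorted p_sorted _].
  split=> // [|x /andP[xw]]; first by apply/allP => x xp; apply: contraNneq wNp => <-.
  by rewrite -(mem_rot i) def_s inE (negbTE xw).
exists s; split=> [|| x /andP[] //].
  by case: s s_cycle {s_uniq wNs} => //= x p; rewrite rcons_path => /andP[].
by apply/allP => x xs; apply: contraNneq wNs => <-.
Qed.

Section OddCycles.
Variable T : finType.
Implicit Types (E C F : {set {set T}}) (s : seq T).

Lemma in_verts C e x : e \in C -> x \in e -> x \in verts C.
Proof. by move=> eC xe; apply/bigcupP; exists e. Qed.

Lemma mem_cycle_edges s e x : e \in cycle_edges s -> x \in e -> x \in s.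
Proof. by case/imsetP=> y ys ->; rewrite !inE => /predU1P[-> | /eqP->]; rewrite ?mem_next. Qed.

Lemma cycle_edges_cycle s : uniq s -> cycle (fun x y => [set x; y] \in cycle_edges s) s.
Proof.
move=> s_uniq; apply: (sub_in_cycle _ (allss s) (cycle_next s_uniq)).
by move=> x y xs _ /eqP <-; apply/imsetP; exists x.
Qed.

Lemma odd_cycle_subset E C : odd_cycle E C -> C \subset E.
Proof.
case=> s [_ _ _ s_cycle ->]; apply/subsetP => _ /imsetP[x xs ->].
exact: next_cycle s_cycle xs.
Qed.

Lemma odd_cycle_not_bipartite E C F : odd_cycle E C -> colorable F 2 -> ~~ (C \subset F).
Proof.
case=> s [s_uniq s_odd _ _ ->] /existsP[f /forallP f_ok]; apply/negP => sCF.
have /cycle_alternating_even : cycle (fun x y => (f x == ord0) != (f y == ord0)) s.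
  apply: sub_cycle (cycle_edges_cycle s_uniq) => x y /(subsetP sCF) xyF.
  move: (implyP (forallP (f_ok x) y) xyF).
  by case: (f x) (f y) => [[|[|?]] ?] [[|[|?]] ?].
by rewrite s_odd.
Qed.

Lemma edge_has_vertex_off (e : {set T}) w : #|e| = 2 -> exists2 x, x \in e & x != w.
Proof.
move=> card_e; have /subsetPn[x xe] : ~~ (e \subset [set w]).
  by apply/negP => /subset_leq_card; rewrite card_e cards1.
by rewrite inE; exists x.
Qed.

Lemma disjoint_of_card_verts_le1 C1 C2 :
  simple_graph C1 -> #|verts C1 :&: verts C2| <= 1 -> [disjoint C1 & C2].
Proof.
move=> simC1 le1; rewrite -setI_eq0; apply/set0Pn => -[e /setIP[eC1 eC2]].
have : e \subset verts C1 :&: verts C2.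
  by apply/subsetP => x xe; rewrite inE (in_verts eC1 xe) (in_verts eC2 xe).
by move/subset_leq_card; rewrite simC1 // => /leq_trans/(_ le1).
Qed.

(* The cycle restricted to the vertices other than the only possible common
   vertex w is connected, and along its edges membership in verts C1 is
   constant; an edge of C1 and an edge of C2 would each supply a vertex
   other than w on opposite sides. *)
Lemma cycle_edges_subset_either C1 C2 s :
  uniq s -> simple_graph (cycle_edges s) -> cycle_edges s \subset C1 :|: C2 ->
  #|verts C1 :&: verts C2| <= 1 ->
  (cycle_edges s \subset C1) || (cycle_edges s \subset C2).
Proof.
set C := cycle_edges s => s_uniq simC sC12 le1.
have edge_in_either e : e \in C -> (e \in C1) || (e \in C2).
  by move=> eC; rewrite -in_setU (subsetP sC12).
apply/negPn/negP; rewrite negb_or => /andP[/subsetPn[a aC aNC1] /subsetPn[b bC bNC2]].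
have [x0 _] : exists x0, x0 \in a by apply/card_gt0P; rewrite simC.
have [w common_w] := subset_set1_of_card_le1 x0 le1.
have only_C2 x : x \in verts C2 -> x != w -> x \notin verts C1.
  by move=> x2; apply: contra => x1; rewrite -in_set1 (subsetP common_w) // inE x1.
have h_edge : {in predC1 w &, forall x y, [set x; y] \in C ->
                (x \in verts C1) = (y \in verts C1)}.
  move=> x y xw yw /edge_in_either/orP[] xy_in.
    by rewrite !(in_verts xy_in) // !inE eqxx ?orbT.
  by rewrite !(negbTE (only_C2 _ _ _)) // (in_verts xy_in) // !inE eqxx ?orbT.
have [xa xa_a xaw] := edge_has_vertex_off w (simC a aC).
have [xb xb_b xbw] := edge_has_vertex_off w (simC b bC).
have aC2 : a \in C2 by move: (edge_in_either a aC); rewrite (negbTE aNC1).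
have bC1 : b \in C1 by move: (edge_in_either b bC); rewrite (negbTE bNC2) orbF.
have xa_off : xa \in [predD1 s & w] by rewrite inE xaw (mem_cycle_edges aC xa_a).
have xb_off : xb \in [predD1 s & w] by rewrite inE xbw (mem_cycle_edges bC xb_b).
have := cycle_homo_eq_off s_uniq (cycle_edges_cycle s_uniq) h_edge xa_off xb_off.
by rewrite (in_verts bC1 xb_b) (negbTE (only_C2 _ (in_verts aC2 xa_a) xaw)).
Qed.

End OddCycles.

Section Critical32.
Variables (T : finType) (E : {set {set T}}).
Hypotheses (simE : simple_graph E) (critE : critical32 E).

Lemma critical32_bipartite_minus_edge e :
  e \in E -> exists F : {set {set T}},
    [/\ F \subset E :\ e, colorable F 2 & #|(E :\ e) :\: F| <= 1].
Proof.
move=> eE; case: critE => /(_ e eE) + chi3 es2; rewrite es2 => es_lt2.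
have [small | big] := leqP #|E :\ e| 1.
  by exists set0; rewrite sub0set setD0 colorable_set0.
have [F [sF chiF le_es]] := es_chi_witness (ltnW (leq_trans es_lt2 big)).
exists F; split=> //; last exact: leq_trans le_es es_lt2.
have simF := simple_graph_subset simE (subset_trans sF (subD1set E e)).
apply: colorable_widen (chi_colorable simF); rewrite chiF -subn1.
by have := chi_subset simE (subD1set E e); rewrite chi3 => /(leq_sub2r 1).
Qed.

Lemma critical32_odd_cycles_avoiding e :
  e \in E -> exists f, forall C, odd_cycle E C -> e \notin C -> f \in C.
Proof.
move=> eE; have [F [sF colF le1]] := critical32_bipartite_minus_edge eE.
have [f sub_f] := subset_set1_of_card_le1 e le1.
exists f => C oddC eNC; have /subsetPn[a aC aNF] := odd_cycle_not_bipartite oddC colF.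
suff : a \in [set f] by rewrite inE => /eqP <-.
rewrite (subsetP sub_f) // !inE aNF (subsetP (odd_cycle_subset oddC)) // andbT.
by apply: contraNneq eNC => <-.
Qed.

Section TwoDisjointOddCycles.
Variables C1 C2 : {set {set T}}.
Hypotheses (oddC1 : odd_cycle E C1) (oddC2 : odd_cycle E C2).
Hypothesis disC12 : [disjoint C1 & C2].

Lemma critical32_subset_union : E \subset C1 :|: C2.
Proof.
apply/subsetP => e eE; rewrite inE.
have [f f_cover] := critical32_odd_cycles_avoiding eE.
apply/negPn/negP; rewrite negb_or => /andP[eNC1 eNC2].
by have := disjointFr disC12 (f_cover _ oddC1 eNC1); rewrite f_cover.
Qed.

Lemma critical32_odd_cycle_subset_eq C : odd_cycle E C -> C \subset C1 -> C = C1.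
Proof.
move=> oddC sCC1; apply/eqP; rewrite eqEsubset sCC1; apply/subsetP => e eC1.
apply/negPn/negP => eNC.
have [f f_cover] := critical32_odd_cycles_avoiding (subsetP (odd_cycle_subset oddC1) e eC1).
have eNC2 : e \notin C2 by rewrite (disjointFr disC12 eC1).
by have := disjointFr disC12 (subsetP sCC1 f (f_cover _ oddC eNC)); rewrite f_cover.
Qed.

End TwoDisjointOddCycles.

Lemma critical32_odd_cycles_eq C1 C2 C :
  odd_cycle E C1 -> odd_cycle E C2 -> #|verts C1 :&: verts C2| <= 1 ->
  odd_cycle E C -> C = C1 \/ C = C2.
Proof.
move=> oddC1 oddC2 le1 oddC; have sCE := odd_cycle_subset oddC.
have simC1 := simple_graph_subset simE (odd_cycle_subset oddC1).
have dis12 := disjoint_of_card_verts_le1 simC1 le1.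
have [s [s_uniq _ _ _ defC]] := oddC; rewrite defC in sCE.
have sC12 := subset_trans sCE (critical32_subset_union oddC1 oddC2 dis12).
have simC := simple_graph_subset simE sCE.
case/orP: (cycle_edges_subset_either s_uniq simC sC12 le1); rewrite -defC => sC.
  by left; apply: critical32_odd_cycle_subset_eq oddC1 oddC2 dis12 _ oddC sC.
by right; apply: critical32_odd_cycle_subset_eq oddC2 oddC1 _ _ oddC sC; rewrite disjoint_sym.
Qed.

End Critical32.

Theorem lemma2p6 (T : finType) (E : {set {set T}}) :
  simple_graph E ->
  critical32 E ->
  (exists C1 C2 C3 : {set {set T}},
      [/\ odd_cycle E C1, odd_cycle E C2 & odd_cycle E C3] /\
      [/\ C1 != C2, C1 != C3 & C2 != C3]) ->
  forall C1 C2 : {set {set T}},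
    odd_cycle E C1 -> odd_cycle E C2 -> C1 != C2 ->
    1 < #|verts C1 :&: verts C2|.
Proof.
move=> simE critE [D1 [D2 [D3 [[oddD1 oddD2 oddD3] [neq12 neq13 neq23]]]]] C1 C2 oddC1 oddC2 _.
rewrite ltnNge; apply/negP => le1.
have eq_C1_or_C2 := critical32_odd_cycles_eq simE critE oddC1 oddC2 le1.
case: (eq_C1_or_C2 _ oddD1) (eq_C1_or_C2 _ oddD2) (eq_C1_or_C2 _ oddD3) neq12 neq13 neq23
  => -> [] -> [] ->; by rewrite ?eqxx.
Qed.
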